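(* For all integers $d\geq2$, $k\geq1$ and $j\in\{0,\dots,k-1\}$, \[ \frac{1}{(j+1)\prod_{\ell=1}^{k-j}\left(1+\frac{1}{d\ell}\right)}\leq k^{-1/d}. \] *)

From Stdlib Require Import Reals.
Open Scope R_scope.

Fixpoint prod_factor (d : nat) (m : nat) : R :=
  match m with
  | O => 1
  | S m' => prod_factor d m' * (1 + 1 / (INR d * INR (S m')))
  end.

(** Bernoulli's inequality gives [(1 + 1/(d l))^d >= (l + 1)/l], so the
    [d]-th power of the product telescopes to at least [m + 1], with
    [m = k - j].  Hence [((j + 1) P)^d >= (j + 1) (m + 1) >= j + m = k], and
    taking [d]-th roots gives [(j + 1) P >= k^(1/d)]. *)

From Stdlib Require Import Reals Lra Lia.
Open Scope R_scope.

Lemma prod_factor_pos (d m : nat) : (0 < d)%nat -> 0 < prod_factor d m.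
Proof.
  intros Hd; induction m as [|m IH]; cbn [prod_factor]; [lra|].
  assert (0 < INR d * INR (S m)) by (apply Rmult_lt_0_compat; apply lt_0_INR; lia).
  assert (0 < 1 / (INR d * INR (S m))) by (apply Rdiv_lt_0_compat; lra).
  apply Rmult_lt_0_compat; lra.
Qed.

Lemma prod_factor_pow_ge (d m : nat) :
  (0 < d)%nat -> INR (m + 1) <= prod_factor d m ^ d.
Proof.
  intros Hd; induction m as [|m IH]; cbn [prod_factor].
  - rewrite pow1; simpl; lra.
  - assert (Hdpos : 0 < INR d) by (apply lt_0_INR; lia).
    assert (Hmpos : 0 < INR (S m)) by (apply lt_0_INR; lia).
    assert (Hbern : INR (S m + 1) / INR (S m)
                    <= (1 + 1 / (INR d * INR (S m))) ^ d).
    { replace (INR (S m + 1) / INR (S m))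
        with (1 + INR d * (1 / (INR d * INR (S m)))).
      - apply poly, Rdiv_lt_0_compat; [lra | now apply Rmult_lt_0_compat].
      - rewrite plus_INR; simpl (INR 1); field; lra. }
    rewrite Rpow_mult_distr.
    replace (INR (S m + 1)) with (INR (m + 1) * (INR (S m + 1) / INR (S m))).
    2: { replace (INR (m + 1)) with (INR (S m)) by (f_equal; lia); field; lra. }
    apply Rmult_le_compat; auto using pos_INR.
    apply Rlt_le, Rdiv_lt_0_compat; [apply lt_0_INR; lia | lra].
Qed.

Lemma Rpower_root_le (x y : R) (n : nat) :
  (0 < n)%nat -> 0 < x -> 0 < y -> x <= y ^ n -> Rpower x (1 / INR n) <= y.
Proof.
  intros Hn Hx Hy Hxy.
  assert (Hnpos : 0 < INR n) by (apply lt_0_INR; lia).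
  assert (Hroot : Rpower (y ^ n) (1 / INR n) = y).
  { rewrite <- Rpower_pow, Rpower_mult by exact Hy.
    replace (INR n * (1 / INR n)) with 1 by (field; lra).
    now apply Rpower_1. }
  rewrite <- Hroot.
  apply Rle_Rpower_l; [apply Rlt_le, Rdiv_lt_0_compat; lra | lra].
Qed.

Theorem lemma8p2 (d k j : nat) (hd : (2 <= d)%nat) (hk : (1 <= k)%nat)
  (hj : (j <= k - 1)%nat) :
  1 / (INR (j + 1) * prod_factor d (k - j)) <= Rpower (INR k) (- (1 / INR d)).
Proof.
  set (m := (k - j)%nat).
  set (A := INR (j + 1) * prod_factor d m).
  assert (Hj : 1 <= INR (j + 1)) by (apply (le_INR 1); lia).
  assert (HP : 0 < prod_factor d m) by (apply prod_factor_pos; lia).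
  assert (HA : 0 < A) by (unfold A; nra).
  assert (Hk : 0 < INR k) by (apply lt_0_INR; lia).
  assert (HkA : INR k <= A ^ d).
  { assert (Hkjm : INR k <= INR (j + 1) * INR (m + 1))
      by (rewrite <- mult_INR; apply le_INR; unfold m; nia).
    assert (Hjd : INR (j + 1) <= INR (j + 1) ^ d)
      by (rewrite <- (pow_1 (INR (j + 1))) at 1; apply Rle_pow; [lra | lia]).
    assert (Hmd := prod_factor_pow_ge d m ltac:(lia)).
    unfold A; rewrite Rpow_mult_distr.
    apply Rle_trans with (1 := Hkjm).
    apply Rmult_le_compat; auto using pos_INR; lra. }
  rewrite Rpower_Ropp; unfold Rdiv; rewrite Rmult_1_l.
  apply Rinv_le_contravar.
  - unfold Rpower; apply exp_pos.
  - apply Rpower_root_le; auto; lia.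
Qed.
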